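(* Let $n$ be a natural number, $P$ a polytope, and $f\in\operatorname{vert}(P,\triangle_n)$. Then there exists a face $G\subset\triangle_n$ such that $\dim f(P)=\dim G$, $f(P)\subset G$, and every facet of $G$ contains a facet of $f(P)$.
   Context: For convex polytopes $P,Q$, $\operatorname{Hom}(P,Q)$ is the set of maps $P\to Q$ that are restrictions of affine maps $\operatorname{Aff}(P)\to\operatorname{Aff}(Q)$; it is a convex polytope in the affine space of affine maps $\operatorname{Aff}(P)\to\operatorname{Aff}(Q)$, and $\operatorname{vert}(P,Q)$ denotes its set of vertices. $\triangle_n=\operatorname{conv}(0,e_1,\ldots,e_n)\subset\mathbb{R}^n$. A facet of a polytope is a face of codimension one in it. *)

From HB Require Import structures.
From mathcomp Require Import all_boot all_order all_algebra.
From mathcomp Require Import boolp classical_sets.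
From mathcomp Require Import reals.
Set Implicit Arguments. Unset Strict Implicit. Unset Printing Implicit Defensive.
Import Order.TTheory GRing.Theory Num.Theory.
Local Open Scope ring_scope.
Local Open Scope classical_set_scope.

Section Polytopes.
Variable R : realType.

Definition conv (d : nat) (V : seq 'rV[R]_d) : set 'rV[R]_d :=
  [set x | exists w : 'I_(size V) -> R,
     (forall i, 0 <= w i) /\ \sum_i w i = 1 /\ x = \sum_i w i *: V`_i].

Definition simplex (n : nat) : set 'rV[R]_n :=
  conv (0 :: [seq delta_mx 0 i | i <- enum 'I_n]).

Definition is_affine (m n : nat) (f : 'rV[R]_m -> 'rV[R]_n) : Prop :=
  exists (A : 'M[R]_(m, n)) (b : 'rV[R]_n), forall x, f x = x *m A + b.

(* f (as a map on P) belongs to Hom(P,Q): restriction to P of an affine map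
   with f(P) contained in Q.  Two such maps are the same element of Hom(P,Q)
   iff they agree on P. *)
Definition in_Hom (m n : nat) (P : set 'rV[R]_m) (Q : set 'rV[R]_n)
  (f : 'rV[R]_m -> 'rV[R]_n) : Prop :=
  is_affine f /\ f @` P `<=` Q.

Definition is_vert (m n : nat) (P : set 'rV[R]_m) (Q : set 'rV[R]_n)
  (f : 'rV[R]_m -> 'rV[R]_n) : Prop :=
  in_Hom P Q f /\
  forall (g h : 'rV[R]_m -> 'rV[R]_n) (t : R),
    in_Hom P Q g -> in_Hom P Q h -> 0 < t -> t < 1 ->
    (forall x, P x -> f x = t *: g x + (1 - t) *: h x) ->
    forall x, P x -> g x = h x.

(* S contains k+1 affinely independent points *)
Definition aff_indep (n : nat) (S : set 'rV[R]_n) (k : nat) : Prop :=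
  exists X : 'M[R]_(k.+1, n), (forall i, S (row i X)) /\
    row_free (\matrix_(i < k) (row (lift ord0 i) X - row ord0 X)).

(* affine dimension (dim of the affine hull), -1 for the empty set *)
Definition adim (n : nat) (S : set 'rV[R]_n) : int :=
  ((\max_(k < n.+1 | `[< aff_indep S k >]) k.+1)%N)%:Z - 1.

(* faces of a convex set K: intersections with supporting hyperplanes
   (c = 0 gives K itself or the empty face) *)
Definition face (n : nat) (K F : set 'rV[R]_n) : Prop :=
  exists (c : 'cV[R]_n) (b : R),
    (forall x, K x -> (x *m c) 0 0 <= b) /\
    F = K `&` [set x | (x *m c) 0 0 = b].

Definition facet (n : nat) (K F : set 'rV[R]_n) : Prop :=
  face K F /\ adim F = adim K - 1.

End Polytopes.

From mathcomp Require Import all_boot all_order all_algebra.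
From mathcomp Require Import boolp classical_sets reals.
From mathcomp.algebra_tactics Require Import ring lra.
Set Implicit Arguments. Unset Strict Implicit. Unset Printing Implicit Defensive.
Import Order.TTheory GRing.Theory Num.Theory.
Local Open Scope ring_scope.
Local Open Scope classical_set_scope.

(* In barycentric coordinates the simplex is the nonnegative orthant.  Let J be
   the set of coordinates that do not vanish identically on f(P), and G the face
   of the simplex on which all coordinates outside J vanish; then f(P) lies in G.
   As f is a vertex of Hom(P, simplex), no map h <> 0 on P leaves both f + h and
   f - h in Hom(P, simplex).  Taking for h a small multiple of the map that moves
   the mass a_j y_j of every coordinate onto one fixed coordinate j1 shows that a
   linear form a, dominated on f(P) by the coordinate y_j1, is concentrated on j1
   at the points of f(P).  With a vanishing on f(P) this gives a_j = 0 for all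
   j in J, so dim f(P) = |J| - 1 = dim G.  The facets of G are its intersections
   with {y_j0 = 0}, j0 in J, and with j1 = j0 the same argument shows that
   f(P) meets such a facet in a face of dimension |J| - 2. *)

Section Barycentric.
Variables (R : realType) (n : nat).

Definition bary_mx : 'M[R]_(n, 1 + n) := row_mx (const_mx (-1)) 1%:M.
Definition bary_off : 'rV[R]_(1 + n) := row_mx (const_mx 1) 0.

(* Barycentric coordinates [(1 - sum_i z_i, z)] of [z] with respect to the
   vertices [0, e_1, ..., e_n] of the simplex. *)
Definition bary (z : 'rV[R]_n) : 'rV[R]_(1 + n) := z *m bary_mx + bary_off.

Definition simplex_vtx (j : 'I_(1 + n)) : 'rV[R]_n := rsubmx (delta_mx 0 j).

Lemma bary_lshift z : bary z 0 (lshift n 0) = 1 - \sum_i z 0 i.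
Proof.
rewrite /bary /bary_mx /bary_off mxE mul_mx_row !row_mxEl !mxE addrC.
by congr (_ + _); rewrite -sumrN; apply: eq_bigr => i _; rewrite !mxE mulrN1.
Qed.

Lemma bary_rshift z i : bary z 0 (rshift 1 i) = z 0 i.
Proof.
by rewrite /bary /bary_mx /bary_off mxE mul_mx_row !row_mxEr mulmx1 mxE addr0.
Qed.

Lemma sum_bary z : \sum_j bary z 0 j = 1.
Proof.
rewrite big_split_ord /= big_ord1 bary_lshift.
by under eq_bigr do rewrite bary_rshift; rewrite subrK.
Qed.

Lemma rsubmx_bary z : rsubmx (bary z) = z.
Proof. by apply/rowP => i; rewrite mxE bary_rshift. Qed.

Lemma baryK (u : 'rV[R]_(1 + n)) : \sum_j u 0 j = 1 -> bary (rsubmx u) = u.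
Proof.
move=> u1; apply/rowP => j; rewrite -(splitK j); case: (split j) => k /=.
  rewrite (ord1 k) bary_lshift -u1 big_split_ord /= big_ord1.
  by under [X in _ - X]eq_bigr do rewrite mxE; rewrite addrK.
by rewrite bary_rshift mxE.
Qed.

Lemma bary_mx_free : row_free bary_mx.
Proof.
apply/inj_row_free => z /(congr1 rsubmx).
by rewrite /bary_mx mul_mx_row row_mxKr mulmx1 linear0.
Qed.

Lemma rsubmxK_bary_mx (u : 'rV[R]_(1 + n)) :
  \sum_j u 0 j = 0 -> rsubmx u *m bary_mx = u.
Proof.
move=> u0; have sum_off : \sum_j bary_off 0 j = 1.
  by have := sum_bary 0; rewrite /bary mul0mx add0r.
have : \sum_j (u + bary_off) 0 j = 1.
  by under eq_bigr do rewrite mxE; rewrite big_split /= u0 sum_off add0r.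
by move/baryK; rewrite linearD /= /bary_off row_mxKr addr0 => /addIr.
Qed.

Lemma bary_simplex_vtx j : bary (simplex_vtx j) = delta_mx 0 j.
Proof.
apply: baryK; rewrite (bigD1 j) //= mxE !eqxx big1 ?addr0 // => k kj.
by rewrite mxE (negPf kj) andbF.
Qed.

Lemma bary_comb z : \sum_j bary z 0 j *: simplex_vtx j = z.
Proof.
under eq_bigr do rewrite -linearZ.
by rewrite -linear_sum /= -row_sum_delta rsubmx_bary.
Qed.

End Barycentric.

Section ConvexHull.
Variables (R : realType) (m k : nat) (V : seq 'rV[R]_m).

Lemma conv_affine (M : 'M[R]_(m, k)) (v : 'rV[R]_k) x : conv V x ->
  exists w : 'I_(size V) -> R, (forall i, 0 <= w i) /\
    x *m M + v = \sum_i w i *: (V`_i *m M + v).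
Proof.
case=> w [w0 [w1 ->]]; exists w; split => //.
under [RHS]eq_bigr do rewrite scalerDr.
rewrite big_split /= -scaler_suml w1 scale1r mulmx_suml; congr (_ + _).
by apply: eq_bigr => i _; rewrite scalemxAl.
Qed.

Lemma conv_ge0 (M : 'M[R]_(m, k)) (v : 'rV[R]_k) x j :
  (forall i : 'I_(size V), 0 <= (V`_i *m M + v) 0 j) -> conv V x ->
  0 <= (x *m M + v) 0 j.
Proof.
move=> h /(conv_affine M v) [w [w0 ->]]; rewrite summxE.
by apply: sumr_ge0 => i _; rewrite mxE mulr_ge0.
Qed.

Lemma conv_eq0 (M : 'M[R]_(m, k)) (v : 'rV[R]_k) x j :
  (forall i : 'I_(size V), (V`_i *m M + v) 0 j = 0) -> conv V x ->
  (x *m M + v) 0 j = 0.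
Proof.
move=> h /(conv_affine M v) [w [_ ->]]; rewrite summxE.
by apply: big1 => i _; rewrite mxE h mulr0.
Qed.

Lemma mem_conv (i : 'I_(size V)) : conv V V`_i.
Proof.
exists (fun j => (j == i)%:R); split; first by move=> j; rewrite ler0n.
split; first by rewrite (bigD1 i) //= eqxx big1 ?addr0 // => j /negPf ->.
rewrite (bigD1 i) //= eqxx scale1r big1 ?addr0 // => j /negPf ->.
by rewrite scale0r.
Qed.

End ConvexHull.

Lemma sum_cast_ord (V : nmodType) p q (e : p = q) (F : 'I_q -> V) :
  \sum_(i < p) F (cast_ord e i) = \sum_(j < q) F j.
Proof. by case: q / e F => F; apply: eq_bigr => i _; rewrite cast_ord_id. Qed.

Section Simplex.
Variables (R : realType) (n : nat).

Lemma simplexP (z : 'rV[R]_n) : simplex z <-> forall j, 0 <= bary z 0 j.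
Proof.
rewrite /simplex /conv; set ds := map _ _; set s := 0 :: ds.
have size_ds : size ds = n by rewrite size_map size_enum_ord.
have size_s : size s = (1 + n)%N by rewrite /= size_ds.
have nth_s (i : 'I_(size s)) : s`_i = simplex_vtx R (cast_ord size_s i).
  apply/rowP => l; rewrite !mxE /=.
  case: (unliftP ord0 i) => [i'|] -> /=; last by rewrite mxE.
  have i'_lt : (i' < n)%N := leq_trans (ltn_ord i') (eq_leq size_ds).
  rewrite (nth_map (Ordinal i'_lt)) ?size_enum_ord // mxE eqxx -!val_eqE /=.
  by rewrite nth_enum_ord.
split.
  by move=> z_conv j; rewrite /bary; apply: conv_ge0 z_conv => i;
    rewrite -/(bary _) nth_s bary_simplex_vtx mxE ler0n.
move=> z_ge0; exists (fun i => bary z 0 (cast_ord size_s i)).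
split=> //; split; first by rewrite (sum_cast_ord _ (fun j => bary z 0 j)) sum_bary.
under eq_bigr do rewrite nth_s.
by rewrite (sum_cast_ord _ (fun j => bary z 0 j *: simplex_vtx R j)) bary_comb.
Qed.

End Simplex.

Section AffineIndependence.
Variables (R : realType) (n : nat).
Implicit Types S : set 'rV[R]_n.

Definition diff_mx k : 'M[R]_(k, k.+1) :=
  \matrix_(i < k) (delta_mx 0 (lift ord0 i) - delta_mx 0 ord0).

Lemma diff_rowsE k (X : 'M[R]_(k.+1, n)) :
  \matrix_(i < k) (row (lift ord0 i) X - row ord0 X) = diff_mx k *m X.
Proof. by apply/row_matrixP => i; rewrite rowK row_mul rowK mulmxBl -!rowE. Qed.

Lemma diff_mx_sum k : diff_mx k *m const_mx 1 = 0 :> 'cV[R]_k.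
Proof.
apply/row_matrixP => i; rewrite row_mul rowK mulmxBl -!rowE !row_const.
by rewrite subrr; apply/rowP => j; rewrite !mxE.
Qed.

Lemma mulmx_diff_lift k (w : 'rV[R]_k) i : (w *m diff_mx k) 0 (lift ord0 i) = w 0 i.
Proof.
rewrite mulmx_sum_row summxE (bigD1 i) //= rowK !mxE !eqxx subr0 mulr1.
rewrite big1 ?addr0 // => l li; rewrite rowK !mxE /= (inj_eq lift_inj).
by rewrite eq_sym (negPf li) subrr mulr0.
Qed.

Lemma mulmx_diff_ord0 k (w : 'rV[R]_k) : (w *m diff_mx k) 0 ord0 = - \sum_i w 0 i.
Proof.
rewrite mulmx_sum_row summxE -sumrN; apply: eq_bigr => l _.
by rewrite rowK !mxE /= sub0r mulrN1.
Qed.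

Lemma diff_mx_onto k (w : 'rV[R]_k.+1) : w *m const_mx 1 = 0 :> 'M_1 ->
  (\row_(i < k) w 0 (lift ord0 i)) *m diff_mx k = w.
Proof.
move=> /matrixP /(_ 0 0); rewrite !mxE big_ord_recl /=.
rewrite !mxE mulr1 (eq_bigr (fun i => w 0 (lift ord0 i))); last first.
  by move=> i _; rewrite !mxE mulr1.
move/eqP; rewrite addr_eq0 => /eqP w0; apply/rowP => j.
case: (unliftP ord0 j) => [i|] ->; first by rewrite mulmx_diff_lift mxE.
by rewrite mulmx_diff_ord0 w0; congr (- _); apply: eq_bigr => i _; rewrite mxE.
Qed.

Lemma row_free_diff_bary k (z : 'I_k.+1 -> 'rV[R]_n) :
  row_free (diff_mx k *m \matrix_i z i) = row_free (\matrix_i bary (z i)).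
Proof.
set X := \matrix_i z i; set B := \matrix_i bary (z i).
have BE : B = X *m bary_mx R n + const_mx 1 *m bary_off R n.
  apply/row_matrixP => i; rewrite rowK; apply/rowP => j.
  rewrite /bary !mxE big_ord1 !mxE mul1r; congr (_ + _).
  by apply: eq_bigr => l _; rewrite !mxE.
have B1 : B *m const_mx 1 = const_mx 1 :> 'cV[R]_k.+1.
  apply/colP => i; rewrite [LHS]mxE [RHS]mxE -[RHS](sum_bary (z i)).
  by apply: eq_bigr => j _; rewrite !mxE mulr1.
apply/idP/idP => free.
  apply/inj_row_free => w wB0.
  have w1 : w *m const_mx 1 = 0 :> 'M_1 by rewrite -B1 mulmxA wB0 mul0mx.
  have /eqP : w *m X = 0.
    apply/eqP; rewrite -(mulmx_free_eq0 _ (bary_mx_free R n)).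
    by move: wB0; rewrite BE mulmxDr !mulmxA w1 mul0mx addr0 => ->.
  rewrite -(diff_mx_onto w1) -mulmxA mulmx_free_eq0 // => /eqP ->.
  by rewrite mul0mx.
apply/inj_row_free => w wDX0.
have /eqP : (w *m diff_mx k) *m B = 0.
  rewrite BE mulmxDr !mulmxA -(mulmxA w) wDX0 mul0mx add0r.
  by rewrite -(mulmxA w) diff_mx_sum mulmx0 mul0mx.
rewrite mulmx_free_eq0 // => /eqP wD0; apply/rowP => i.
by rewrite -(mulmx_diff_lift w i) wD0 !mxE.
Qed.

Lemma aff_indepP S k : aff_indep S k <->
  exists z : 'I_k.+1 -> 'rV[R]_n, (forall i, S (z i)) /\ row_free (\matrix_i bary (z i)).
Proof.
split=> [[X [SX free]] | [z [Sz free]]].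
  exists (fun i => row i X); split=> //; rewrite -row_free_diff_bary.
  have -> : \matrix_i row i X = X by apply/row_matrixP => i; rewrite rowK.
  by rewrite -diff_rowsE.
exists (\matrix_i z i); split; first by move=> i; rewrite rowK.
by rewrite diff_rowsE row_free_diff_bary.
Qed.

End AffineIndependence.

Section AffineDimension.
Variables (R : realType) (n : nat).
Implicit Types (S : set 'rV[R]_n) (K : {set 'I_(1 + n)}).

Definition supported K : set 'rV[R]_n :=
  [set z | forall j, j \notin K -> bary z 0 j = 0].

Definition sel_mx K : 'M[R]_(1 + n, #|K|) := \matrix_(j, l) (j == enum_val l)%:R.

Lemma mul_sel_mx k K (M : 'M[R]_(k, 1 + n)) i l :
  (M *m sel_mx K) i l = M i (enum_val l).
Proof.
rewrite !mxE (bigD1 (enum_val l)) //= !mxE eqxx mulr1 big1 ?addr0 // => j jl.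
by rewrite !mxE (negPf jl) mulr0.
Qed.

Lemma sel_mxK k K (M : 'M[R]_(k, 1 + n)) :
  (forall i j, j \notin K -> M i j = 0) -> M *m sel_mx K *m (sel_mx K)^T = M.
Proof.
move=> M0; apply/matrixP => i j; rewrite mxE.
under eq_bigr do rewrite mul_sel_mx [(sel_mx K)^T _ _]mxE [sel_mx K _ _]mxE.
have [jK | jNK] := boolP (j \in K).
  rewrite (bigD1 (enum_rank_in jK j)) //= enum_rankK_in // eqxx mulr1.
  rewrite big1 ?addr0 // => l lj; case: eqP => [jl|]; last by rewrite mulr0.
  by case/eqP: lj; apply: enum_val_inj; rewrite enum_rankK_in.
rewrite M0 // big1 // => l _; case: eqP => [jl|]; last by rewrite mulr0.
by move: (enum_valP l); rewrite -jl (negPf jNK).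
Qed.

Lemma aff_indep_supported_lt S K k :
  S `<=` supported K -> aff_indep S k -> (k < #|K|)%N.
Proof.
move=> SK /aff_indepP [z [Sz]]; rewrite -row_leq_rank.
rewrite -(@sel_mxK _ K (\matrix_i bary (z i))) => [rank_ge|i j jNK]; last first.
  by rewrite mxE; apply: SK.
exact: leq_trans rank_ge (leq_trans (mxrankM_maxl _ _) (rank_leq_col _)).
Qed.

Lemma aff_indep_bary_free S p (z : 'I_p -> 'rV[R]_n) : (0 < p)%N ->
  (forall i, S (z i)) -> row_free (\matrix_i bary (z i)) -> aff_indep S p.-1.
Proof. by case: p z => // p z _ Sz free; apply/aff_indepP; exists z. Qed.

Lemma aff_indep_spanning S K N (z : 'I_N -> 'rV[R]_n) (W : pred 'I_N) :
  (forall i, W i -> S (z i)) ->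
  (forall a : 'I_(1 + n) -> R,
     (forall i, W i -> \sum_j a j * bary (z i) 0 j = 0) -> {in K, forall j, a j = 0}) ->
  (0 < #|K|)%N -> aff_indep S #|K|.-1.
Proof.
move=> Sz span K_gt0.
pose L := \matrix_(i < N, l < #|K|) (if W i then bary (z i) 0 (enum_val l) else 0).
have rankL : \rank L = #|K|.
  rewrite -mxrank_tr; apply/eqP/inj_row_free => c cL0.
  pose a j := \sum_l c 0 l * (enum_val l == j)%:R.
  have a0 : {in K, forall j, a j = 0}.
    apply: span => i Wi; move/matrixP: cL0 => /(_ 0 i).
    rewrite [LHS]mxE [RHS]mxE => cLi; rewrite -[RHS]cLi.
    under eq_bigr do rewrite mulr_suml.
    rewrite exchange_big /=; apply: eq_bigr => l _.
    rewrite [L^T _ _]mxE [L _ _]mxE Wi (bigD1 (enum_val l)) //= eqxx mulr1.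
    rewrite big1 ?addr0 // => j jl.
    by rewrite eq_sym (negPf jl) mulr0 mul0r.
  apply/rowP => l; rewrite mxE; have := a0 _ (enum_valP l).
  rewrite /a (bigD1 l) //= eqxx mulr1 big1 ?addr0 // => l' l'l.
  by rewrite (inj_eq enum_val_inj) (negPf l'l) mulr0.
move: (maxrankfun L) (maxrowsub_free L); rewrite rankL => sigma free.
have W_sigma l : W (sigma l).
  apply/negPn/negP => NW.
  have : (delta_mx 0 l : 'rV[R]_#|K|) *m rowsub sigma L == 0.
    by rewrite -rowE row_rowsub; apply/eqP/rowP => l'; rewrite !mxE (negPf NW).
  rewrite mulmx_free_eq0 // => /eqP /matrixP /(_ 0 l) /eqP.
  by rewrite !mxE !eqxx oner_eq0.
apply: (aff_indep_bary_free (z := z \o sigma)) => // [l | ]; first exact: Sz.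
have sigmaL : rowsub sigma L = (\matrix_l bary (z (sigma l))) *m sel_mx K.
  by apply/matrixP => l l'; rewrite mul_sel_mx !mxE W_sigma.
move: free; rewrite sigmaL -!row_leq_rank => /leq_trans; apply.
exact: mxrankM_maxl.
Qed.

Lemma aff_indep_le S k : aff_indep S k -> (k <= n)%N.
Proof. by case=> X [_ /eqP <-]; apply: rank_leq_col. Qed.

Lemma adimE S N : (forall k, aff_indep S k -> (k < N)%N) ->
  ((0 < N)%N -> aff_indep S N.-1) -> adim S = N%:Z - 1.
Proof.
move=> ub lb; rewrite /adim; congr (Posz _ - _); apply/eqP; rewrite eqn_leq.
apply/andP; split; first by apply/bigmax_leqP => k /asboolP /ub.
case: N ub lb => [|k] // ub /(_ isT) indep_k.
have k_lt : (k < n.+1)%N by rewrite ltnS; apply: aff_indep_le indep_k.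
by apply: (@leq_bigmax_cond _ _ _ (Ordinal k_lt)); apply/asboolP.
Qed.

Lemma adim_supported S K N (z : 'I_N -> 'rV[R]_n) (W : pred 'I_N) :
  S `<=` supported K -> (forall i, W i -> S (z i)) ->
  (forall a : 'I_(1 + n) -> R,
     (forall i, W i -> \sum_j a j * bary (z i) 0 j = 0) -> {in K, forall j, a j = 0}) ->
  adim S = #|K|%:Z - 1.
Proof.
move=> SK Sz span; apply: adimE => [k|]; first exact: aff_indep_supported_lt.
exact: aff_indep_spanning span.
Qed.

End AffineDimension.

Section CoordinateFaces.
Variables (R : realType) (n : nat).
Implicit Types (S : set 'rV[R]_n) (J K : {set 'I_(1 + n)}) (z : 'rV[R]_n).

Definition coord_face K : set 'rV[R]_n := [set z : 'rV[R]_n | simplex z /\ supported K z].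

Lemma coord_face_vtx K j : j \in K -> coord_face K (simplex_vtx R j).
Proof.
move=> jK; split; first by apply/simplexP => l; rewrite bary_simplex_vtx mxE ler0n.
move=> l lNK; rewrite bary_simplex_vtx mxE eqxx /=.
by case: eqP lNK => // ->; rewrite jK.
Qed.

Lemma adim_coord_face K : adim (coord_face K) = #|K|%:Z - 1.
Proof.
apply: (@adim_supported _ _ _ _ _ (fun l => simplex_vtx R (enum_val l)) predT).
- by move=> z [].
- by move=> l _; apply/coord_face_vtx/enum_valP.
move=> a a0 j jK; have := a0 (enum_rank_in jK j) isT; rewrite enum_rankK_in //.
under eq_bigr do rewrite bary_simplex_vtx mxE eqxx /=.
by rewrite (bigD1 j) //= eqxx mulr1 big1 ?addr0 // => l /negPf ->; rewrite mulr0.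
Qed.

Lemma supportedP K z : simplex z ->
  supported K z <-> \sum_j bary z 0 j * (j \notin K)%:R = 0.
Proof.
move=> /simplexP z_ge0; split=> [zK | out0 j jNK].
  by apply: big1 => j _; case: (boolP (j \in K)) => jK; rewrite ?mulr0 ?zK ?mul0r.
have terms_ge0 i : true -> 0 <= bary z 0 i * (i \notin K)%:R.
  by move=> _; exact: mulr_ge0 (z_ge0 i) (ler0n _ _).
by have := psumr_eq0P terms_ge0 out0 (i := j) isT; rewrite jNK mulr1.
Qed.

Lemma face_setI_coord_face S K : S `<=` @simplex R n -> face S (S `&` coord_face K).
Proof.
move=> S_simplex; pose chi : 'cV[R]_(1 + n) := \col_j (j \notin K)%:R.
exists (- (bary_mx R n *m chi)), ((bary_off R n *m chi) 0 0).
have cE z : (z *m - (bary_mx R n *m chi)) 0 0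
    = (bary_off R n *m chi) 0 0 - \sum_j bary z 0 j * (j \notin K)%:R.
  have -> : \sum_j bary z 0 j * (j \notin K)%:R = (bary z *m chi) 0 0.
    by rewrite [RHS]mxE; apply: eq_bigr => j _; rewrite [chi _ _]mxE.
  rewrite mulmxN mulmxA /bary mulmxDl.
  by move: (z *m _ *m chi) (bary_off R n *m chi) => A B; rewrite !mxE; ring.
split=> [z /S_simplex /simplexP z_ge0 | ].
  rewrite cE gerBl; apply: sumr_ge0 => j _; exact: mulr_ge0 (z_ge0 j) (ler0n _ _).
apply/seteqP; split=> z /= [Sz].
  by case=> z_simplex /(supportedP K z_simplex) out0; split=> //; rewrite cE out0 subr0.
rewrite cE => cz; have z_simplex := S_simplex z Sz.
by split=> //; split=> //; apply/(supportedP K z_simplex); lra.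
Qed.

Lemma face_coord_faceP J F :
  face (coord_face J) F -> exists2 K : {set 'I_(1 + n)}, K \subset J & F = coord_face K.
Proof.
case=> c [b [c_le ->]]; pose w j := (simplex_vtx R j *m c) 0 0.
have gapE z : b - (z *m c) 0 0 = \sum_j bary z 0 j * (b - w j).
  rewrite -{1}(bary_comb z) mulmx_suml summxE; under [RHS]eq_bigr do rewrite mulrBr.
  rewrite sumrB -mulr_suml sum_bary mul1r; congr (_ - _).
  by apply: eq_bigr => j _; rewrite -scalemxAl mxE.
have gap_ge0 z : coord_face J z -> forall j, 0 <= bary z 0 j * (b - w j).
  case=> /simplexP z_ge0 zJ j; have [jJ | jNJ] := boolP (j \in J).
    by rewrite mulr_ge0 // subr_ge0 c_le //; apply: coord_face_vtx.
  by rewrite zJ // mul0r.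
exists [set j in J | w j == b].
  by apply/fintype.subsetP => j; rewrite finset.inE => /andP[].
apply/seteqP; split=> z.
  case=> zJ /eqP; rewrite eq_sym -subr_eq0 gapE => /eqP gap0; split; first by case: zJ.
  move=> j; rewrite finset.inE negb_and.
  have [jJ | jNJ] /= := boolP (j \in J); last first.
    by move=> _; case: zJ => _; apply.
  move=> wNb; have /eqP := psumr_eq0P (fun j _ => gap_ge0 z zJ j) gap0 (i := j) isT.
  by rewrite mulf_eq0 subr_eq0 [b == _]eq_sym (negPf wNb) orbF => /eqP.
case=> z_simplex zK; have zJ : coord_face J z.
  by split=> // j jNJ; apply: zK; rewrite finset.inE (negPf jNJ).
split=> //=; apply/eqP; rewrite eq_sym -subr_eq0 gapE; apply/eqP/big1 => j _.
have [jK | jNK] := boolP (j \in [set j in J | w j == b]); last by rewrite zK ?mul0r.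
by move: jK; rewrite finset.inE => /andP [_ /eqP ->]; rewrite subrr mulr0.
Qed.

Lemma facet_coord_faceP J F :
  facet (coord_face J) F -> exists2 j0, j0 \in J & F = coord_face (J :\ j0).
Proof.
case=> /face_coord_faceP [K KJ ->]; rewrite !adim_coord_face => cardK.
have [cardJ] : Posz #|J| = Posz #|K|.+1 by rewrite -(addn1 #|K|) PoszD; lra.
have /fintype.subsetPn [j0 j0J j0NK] : ~~ (J \subset K).
  by apply: contraTN isT => /subset_leq_card; rewrite cardJ ltnn.
exists j0 => //; congr coord_face; apply/eqP; rewrite eqEcard; apply/andP; split.
  by apply/fintype.subsetP => j jK; rewrite finset.in_setD1 (fintype.subsetP KJ) // andbT;
    apply: contraNneq j0NK => <-.
by have := cardsD1 j0 J; rewrite j0J cardJ => -[->].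
Qed.

End CoordinateFaces.

Lemma vert_perturb_eq0 (R : realType) m n (P : set 'rV[R]_m) (Q : set 'rV[R]_n)
    (f H : 'rV[R]_m -> 'rV[R]_n) :
  is_vert P Q f -> in_Hom P Q (fun x => f x + H x) -> in_Hom P Q (fun x => f x - H x) ->
  forall x, P x -> H x = 0.
Proof.
case=> _ f_vert plus minus x Px.
have half_gt0 : 0 < 2^-1 :> R by rewrite invr_gt0 ltr0n.
have half_lt1 : 2^-1 < 1 :> R by rewrite invf_lt1 ?ltr0n ?ltr1n.
have mid y : P y -> f y = 2^-1 *: (f y + H y) + (1 - 2^-1) *: (f y - H y).
  by move=> _; apply/rowP => j; rewrite !mxE; lra.
have /rowP Hx := f_vert _ _ _ plus minus half_gt0 half_lt1 mid x Px.
by apply/rowP => j; have := Hx j; rewrite !mxE; lra.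
Qed.

Lemma perturb_ge0 (R : realType) (y a p s C : R) (b : bool) :
  0 <= y -> 0 <= C -> `|s| * (`|a| + C) <= 1 -> (b -> `|p| <= C * y) ->
  0 <= y + s * (a * y - b%:R * p).
Proof.
move=> y_ge0 C_ge0 s_small p_le.
have bp_le : `|b%:R * p| <= C * y.
  by case: b p_le => [/(_ isT) | _]; rewrite ?mul1r // mul0r normr0 mulr_ge0.
have pert_le : `|s * (a * y - b%:R * p)| <= `|s| * (`|a| + C) * y.
  rewrite normrM -mulrA ler_wpM2l // mulrDl; apply: le_trans (ler_normB _ _) _.
  by rewrite normrM (ger0_norm y_ge0) lerD2l.
have : `|s| * (`|a| + C) * y <= y by rewrite -[leRHS]mul1r ler_wpM2r.
have := lerNnormlW pert_le; lra.
Qed.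

Section Shear.
Variables (R : realType) (n : nat) (a : 'I_(1 + n) -> R) (j1 : 'I_(1 + n)).

(* Moves the mass [a j * y j] of every coordinate onto coordinate [j1];
   it preserves the coordinate sum. *)
Definition shear : 'M[R]_(1 + n) :=
  \matrix_(k, j) (a k * (k == j)%:R - a k * (j == j1)%:R).

Lemma shearE (y : 'rV[R]_(1 + n)) j :
  (y *m shear) 0 j = a j * y 0 j - (j == j1)%:R * \sum_k a k * y 0 k.
Proof.
rewrite mxE; under eq_bigr do rewrite mxE mulrBr.
rewrite sumrB (bigD1 j) //= eqxx mulr1 big1 ?addr0; last first.
  by move=> k /negPf ->; rewrite !mulr0.
rewrite mulr_sumr mulrC; congr (_ - _); apply: eq_bigr => k _; ring.
Qed.

Lemma sum_shear (y : 'rV[R]_(1 + n)) : \sum_j (y *m shear) 0 j = 0.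
Proof.
under eq_bigr do rewrite shearE.
rewrite sumrB [X in _ - X](bigD1 j1) //= eqxx mul1r.
by rewrite [X in _ - (_ + X)]big1 ?addr0 ?subrr // => k /negPf ->; rewrite mul0r.
Qed.

End Shear.

Lemma ratio_bound (R : realType) (I : finType) (p y : I -> R) :
  (forall i, 0 <= y i) -> (forall i, y i = 0 -> p i = 0) ->
  exists2 C, 0 <= C & forall i, `|p i| <= C * y i.
Proof.
move=> y_ge0 p0; exists (\sum_i `|p i| / y i).
  by apply: sumr_ge0 => i _; rewrite divr_ge0.
move=> i; have [y_eq0 | y_neq0] := eqVneq (y i) 0.
  by rewrite y_eq0 p0 // normr0 mulr0.
rewrite -[leLHS](divfK y_neq0) ler_wpM2r // (bigD1 i) //= lerDl.
by apply: sumr_ge0 => k _; rewrite divr_ge0.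
Qed.

Section VertexMap.
Variables (R : realType) (m n : nat) (V : seq 'rV[R]_m).
Variables (f : 'rV[R]_m -> 'rV[R]_n) (A : 'M[R]_(m, n)) (b : 'rV[R]_n).
Hypothesis fE : forall x, f x = x *m A + b.
Hypothesis f_vert : is_vert (conv V) (@simplex R n) f.

Lemma bary_fE x :
  bary (f x) = x *m (A *m bary_mx R n) + (b *m bary_mx R n + bary_off R n).
Proof. by rewrite fE /bary mulmxDl mulmxA addrA. Qed.

Lemma conv_bary_ge0 x (u : 'cV[R]_(1 + n)) : conv V x ->
  (forall i : 'I_(size V), 0 <= (bary (f V`_i) *m u) 0 0) ->
  0 <= (bary (f x) *m u) 0 0.
Proof.
move=> x_conv u_ge0; rewrite bary_fE mulmxDl -mulmxA; apply: conv_ge0 x_conv => i.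
by rewrite mulmxA -mulmxDl -bary_fE.
Qed.

Lemma bary_f_ge0 x : conv V x -> forall j, 0 <= bary (f x) 0 j.
Proof.
by move=> x_conv; apply/simplexP; case: f_vert => -[_ fP] _; apply: fP; exists x.
Qed.

Section Rigidity.
Variables (a : 'I_(1 + n) -> R) (j1 : 'I_(1 + n)) (C : R).
Hypothesis C_ge0 : 0 <= C.
Let phi x := \sum_k a k * bary (f x) 0 k.
Hypothesis phi_vtx_le : forall i : 'I_(size V), `|phi V`_i| <= C * bary (f V`_i) 0 j1.

Lemma phi_le x : conv V x -> `|phi x| <= C * bary (f x) 0 j1.
Proof.
move=> x_conv.
have colE z (s : R) : (bary z *m \col_k (C * (k == j1)%:R + s * a k)) 0 0
    = C * bary z 0 j1 + s * \sum_k a k * bary z 0 k.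
  rewrite [LHS]mxE; under eq_bigr do rewrite [(\col__ _) _ _]mxE mulrDr.
  rewrite big_split /= (bigD1 j1) //= eqxx mulr1 big1 ?addr0; last first.
    by move=> k /negPf ->; rewrite !mulr0.
  rewrite mulr_sumr mulrC; congr (_ + _); apply: eq_bigr => k _; ring.
have signed_ge0 (s : R) : `|s| = 1 -> 0 <= C * bary (f x) 0 j1 + s * phi x.
  move=> s1; rewrite /phi -colE. apply: (@conv_bary_ge0 x _ x_conv) => i; rewrite colE.
  have := phi_vtx_le i; rewrite -[`|phi _|]mul1r -s1 -normrM => /lerNnormlW.
  rewrite /phi; lra.
apply/ler_normlP; split.
  by have := signed_ge0 1; rewrite normr1 => /(_ erefl); lra.
by have := signed_ge0 (-1); rewrite normrN normr1 => /(_ erefl); lra.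
Qed.

Let pert x := rsubmx (bary (f x) *m shear a j1).
Let eps := (1 + C + \sum_k `|a k|)^-1.

Lemma eps_gt0 : 0 < eps.
Proof.
have := C_ge0; rewrite /eps invr_gt0; have : 0 <= \sum_k `|a k| by apply: sumr_ge0.
lra.
Qed.

Lemma eps_small j : eps * (`|a j| + C) <= 1.
Proof.
have := C_ge0; rewrite /eps mulrC ler_pdivrMr ?mul1r; last first.
  by have := eps_gt0; rewrite invr_gt0.
rewrite (bigD1 j) //=; have : 0 <= \sum_(k | k != j) `|a k| by apply: sumr_ge0.
lra.
Qed.

Lemma bary_perturb x s :
  bary (f x + s *: pert x) = bary (f x) + s *: (bary (f x) *m shear a j1).
Proof.
by rewrite {1}/bary mulmxDl -scalemxAl /pert rsubmxK_bary_mx ?sum_shear // addrAC.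
Qed.

Lemma perturb_in_Hom (s : R) : `|s| = eps ->
  in_Hom (conv V) (@simplex R n) (fun x => f x + s *: pert x).
Proof.
move=> s_eps; split.
  exists (A + s *: rsubmx (A *m bary_mx R n *m shear a j1)).
  exists (b + s *: rsubmx ((b *m bary_mx R n + bary_off R n) *m shear a j1)).
  move=> x; rewrite /pert bary_fE mulmxDl !linearD /= fE.
  by rewrite -mulmxA -mulmx_rsub -scalemxAr addrACA.
move=> _ [x x_conv <-]; apply/simplexP => j.
rewrite bary_perturb mxE [X in _ + X]mxE shearE.
apply: (perturb_ge0 (C := C)) => //; first exact: bary_f_ge0.
  by rewrite s_eps; apply: eps_small.
by move=> /eqP ->; apply: phi_le.
Qed.

Lemma pert_eq0 x : conv V x -> pert x = 0.
Proof.
move=> x_conv; have eps_neq0 : eps != 0 by rewrite gt_eqF ?eps_gt0.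
have plus := perturb_in_Hom (ger0_norm (ltW eps_gt0)).
have minus : in_Hom (conv V) (@simplex R n) (fun x => f x - eps *: pert x).
  have -> : (fun x => f x - eps *: pert x) = (fun x => f x + - eps *: pert x).
    by apply/funext => y; rewrite scaleNr.
  by apply: perturb_in_Hom; rewrite normrN ger0_norm // ltW // eps_gt0.
have /eqP := vert_perturb_eq0 f_vert plus minus x_conv.
by rewrite scaler_eq0 (negPf eps_neq0) => /eqP.
Qed.

(* Otherwise [f +- eps *: pert] would be two maps of [Hom(P, simplex)] with
   midpoint [f] (see [vert_perturb_eq0]). *)
Lemma vert_shear_rigid j (i : 'I_(size V)) :
  a j * bary (f V`_i) 0 j = (j == j1)%:R * phi V`_i.
Proof.
have := rsubmxK_bary_mx (sum_shear a j1 (bary (f V`_i))).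
rewrite -/(pert V`_i) (pert_eq0 (mem_conv i)) mul0mx => /rowP /(_ j).
by rewrite shearE mxE => /eqP; rewrite eq_sym subr_eq0 => /eqP.
Qed.

End Rigidity.

Definition supp : {set 'I_(1 + n)} :=
  [set j | [exists i : 'I_(size V), bary (f V`_i) 0 j != 0]].

Lemma supp_vtx j : j \in supp -> exists i : 'I_(size V), bary (f V`_i) 0 j != 0.
Proof. by rewrite finset.inE => /existsP. Qed.

Lemma img_supported : f @` conv V `<=` supported supp.
Proof.
move=> _ [x x_conv <-] j; rewrite finset.inE negb_exists => /forallP vtx0.
rewrite bary_fE; apply: conv_eq0 x_conv => i.
by rewrite -bary_fE; apply/eqP; rewrite -[_ == 0]negbK vtx0.
Qed.

Lemma img_coord_face : f @` conv V `<=` coord_face supp.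
Proof.
move=> z fz; split; last exact: img_supported.
by case: fz => x x_conv <-; apply/simplexP/bary_f_ge0.
Qed.

Lemma adim_img : adim (f @` conv V) = #|supp|%:Z - 1.
Proof.
apply: (@adim_supported _ _ _ _ _ (fun i => f V`_i) predT img_supported).
  by move=> i _; exists V`_i => //; apply: mem_conv.
move=> c c0 j /supp_vtx [i /negPf y_neq0].
have bound (i' : 'I_(size V)) :
    `|\sum_k c k * bary (f V`_i') 0 k| <= 0 * bary (f V`_i') 0 j.
  by rewrite c0 // normr0 mul0r.
have := vert_shear_rigid (lexx 0) bound j i.
by rewrite /= c0 // mulr0 => /eqP; rewrite mulf_eq0 y_neq0 orbF => /eqP.
Qed.

Lemma adim_img_facet j0 : j0 \in supp ->
  adim (f @` conv V `&` coord_face (supp :\ j0)) = adim (f @` conv V) - 1.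
Proof.
move=> j0_supp; have card_supp : #|supp| = #|supp :\ j0|.+1.
  by rewrite (cardsD1 j0) j0_supp.
rewrite adim_img card_supp intS [1 + _]addrC addrK.
pose W (i : 'I_(size V)) := bary (f V`_i) 0 j0 == 0.
apply: (@adim_supported _ _ _ _ _ (fun i => f V`_i) W); first by move=> z [_ []].
  move=> i /eqP y0; have fi : (f @` conv V) (f V`_i).
    by exists V`_i => //; apply: mem_conv.
  split=> //; split; first by case: (img_coord_face fi).
  move=> j; rewrite finset.in_setD1 negb_and negbK => /orP [/eqP -> // | jNsupp].
  exact: img_supported fi _ jNsupp.
move=> c c0 j; rewrite finset.in_setD1 => /andP [j_neq_j0 /supp_vtx [i /negPf y_neq0]].
have [C C_ge0 bound] := @ratio_bound _ _
  (fun i : 'I_(size V) => \sum_k c k * bary (f V`_i) 0 k) (fun i => bary (f V`_i) 0 j0)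
  (fun i' => bary_f_ge0 (mem_conv i') j0) (fun i' y0 => c0 i' (introT eqP y0)).
have := vert_shear_rigid C_ge0 bound j i.
by rewrite (negPf j_neq_j0) mul0r => /eqP; rewrite mulf_eq0 y_neq0 orbF => /eqP.
Qed.

End VertexMap.

Unset Implicit Arguments.

Theorem lemma3p3 (R : realType) (m n : nat) (V : seq 'rV[R]_m)
  (f : 'rV[R]_m -> 'rV[R]_n) :
  is_vert (conv V) (@simplex R n) f ->
  exists G : set 'rV[R]_n,
    face (@simplex R n) G /\
    adim (f @` conv V) = adim G /\
    f @` conv V `<=` G /\
    (forall F, facet G F -> exists F', facet (f @` conv V) F' /\ F' `<=` F).
Proof.
move=> f_vert; have [[[A [b fE]] _] _] := f_vert.
exists (coord_face (supp V f)); split.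
  rewrite -(setIidr (_ : coord_face (supp V f) `<=` @simplex R n)) => [|z []//].
  exact: face_setI_coord_face.
split; first by rewrite (adim_img fE f_vert) adim_coord_face.
split; first exact: img_coord_face fE f_vert.
move=> F /facet_coord_faceP [j0 j0_supp ->].
exists (f @` conv V `&` coord_face (supp V f :\ j0)); split; last by move=> z [].
split; last exact: adim_img_facet.
by apply: face_setI_coord_face => z /(img_coord_face fE f_vert) [].
Qed.
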